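(* Let $\mathcal P$ be any set of integer vectors in $\mathbb Z^d$. Then one of the following holds: (i) there is a non-zero $v\in\mathbb R^d$ with $v\cdot p\ge0$ for all $p\in\mathcal P$; (ii) there is a strict sublattice of $\mathbb Z^d$ containing every vector of $\mathcal P$; (iii) there is a finite subset $\mathcal Q=\{q_1,\dots,q_k\}\subseteq\mathcal P$ that is spanning. Moreover, in case (iii), for any norm $\|\cdot\|_M$ on $\mathbb R^d$ there are constants $\mu,\nu$ such that every $z\in\mathbb Z^d$ can be written as $z=q_1+\dots+q_n$ with each $q_i\in\mathcal Q$, $n\le\mu\|z\|_M$ and $\sum_{i=1}^n\|q_i\|_M\le\nu\|z\|_M$.
   Context: A set of vectors in $\mathbb Z^d$ is spanning if every vector of $\mathbb Z^d$ can be written as a finite sum of (possibly repeated) vectors from the set. *)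

From HB Require Import structures.
From mathcomp Require Import all_boot all_order all_algebra.
From mathcomp Require Import reals.
Set Implicit Arguments. Unset Strict Implicit. Unset Printing Implicit Defensive.
Import Order.TTheory GRing.Theory Num.Theory.
Local Open Scope ring_scope.

Definition spanning (d : nat) (Q : 'rV[int]_d -> Prop) : Prop :=
  forall z : 'rV[int]_d, exists s : seq 'rV[int]_d,
    (forall q, q \in s -> Q q) /\ z = \sum_(q <- s) q.

Definition is_sublattice (d : nat) (L : 'rV[int]_d -> Prop) : Prop :=
  L 0 /\ (forall x y, L x -> L y -> L (x - y)).

Definition strict_sublattice (d : nat) (L : 'rV[int]_d -> Prop) : Prop :=
  is_sublattice L /\ exists z, ~ L z.

Definition zR (R : realType) (d : nat) (z : 'rV[int]_d) : 'rV[R]_d :=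
  map_mx (fun x : int => x%:~R) z.

Definition dotR (R : realType) (d : nat) (u v : 'rV[R]_d) : R :=
  \sum_(i < d) u 0 i * v 0 i.

Definition is_norm (R : realType) (d : nat) (N : 'rV[R]_d -> R) : Prop :=
  (forall x, N x = 0 -> x = 0) /\
  (forall (a : R) x, N (a *: x) = `|a| * N x) /\
  (forall x y, N (x + y) <= N x + N y).

(* Let S be the additive monoid generated by P.  By induction on the dimension,
   either some nonzero functional is nonnegative on S, or every z has a positive
   multiple in S.  If S contains points of both signs in the first coordinate,
   the slice of S where that coordinate vanishes is a monoid of smaller
   dimension: a functional w >= 0 on the slice extends to a functional (t, w)
   >= 0 on S, where t is a supremum of ratios, and if the slice has the
   multiple property then so does S, by first cancelling the first coordinate.
   In the second case S is a group, hence either a strict sublattice or all of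
   Z^d; then finitely many elements of P already give the vectors +-e_i, so
   every z is a sum of at most k |z|_1 of them, and |z|_1 is bounded by a
   multiple of any norm of z by the equivalence of norms. *)

From HB Require Import structures.
From mathcomp Require Import all_boot all_order all_algebra.
From mathcomp Require Import reals lra zify.
From mathcomp Require Import boolp classical_sets topology normedtype derive.
Set Implicit Arguments. Unset Strict Implicit. Unset Printing Implicit Defensive.
Import Order.TTheory GRing.Theory Num.Theory.
Import numFieldNormedType.Exports.
Local Open Scope ring_scope.

Definition sum_of d (A : 'rV[int]_d -> Prop) (z : 'rV[int]_d) :=
  exists s : seq 'rV[int]_d, (forall q, q \in s -> A q) /\ z = \sum_(q <- s) q.

Definition sum_of_le d (A : 'rV[int]_d -> Prop) (k : nat) (z : 'rV[int]_d) :=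
  exists s : seq 'rV[int]_d,
    [/\ forall q, q \in s -> A q, z = \sum_(q <- s) q & (size s <= k)%N].

Definition l1norm d (z : 'rV[int]_d) : nat := (\sum_(i < d) `|z 0%R i|)%N.

Section Sums.
Variables (d : nat) (A : 'rV[int]_d -> Prop).

Lemma sum_of1 x : A x -> sum_of A x.
Proof. by exists [:: x]; rewrite big_seq1; split=> // q; rewrite mem_seq1 => /eqP ->. Qed.

Lemma sum_of0 : sum_of A 0.
Proof. by exists [::]; rewrite big_nil. Qed.

Lemma sum_ofD x y : sum_of A x -> sum_of A y -> sum_of A (x + y).
Proof.
move=> [s [sA ->]] [t [tA ->]]; exists (s ++ t); rewrite big_cat.
by split=> // q /[!mem_cat] /orP[/sA | /tA].
Qed.

Lemma sum_of_sub (B : 'rV[int]_d -> Prop) z :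
  (forall q, A q -> B q) -> sum_of A z -> sum_of B z.
Proof. by move=> AB [s [sA ->]]; exists s; split=> // q /sA /AB. Qed.

Lemma sum_of_leP z : sum_of A z <-> exists k, sum_of_le A k z.
Proof.
split=> [[s [sA ->]] | [k [s [sA -> _]]]]; last by exists s.
by exists (size s), s.
Qed.

Lemma sum_of_le0 : sum_of_le A 0 0.
Proof. by exists [::]; rewrite big_nil. Qed.

Lemma sum_of_leD k l x y :
  sum_of_le A k x -> sum_of_le A l y -> sum_of_le A (k + l) (x + y).
Proof.
move=> [s [sA -> sk]] [t [tA -> tl]]; exists (s ++ t).
rewrite big_cat size_cat leq_add //; split=> // q /[!mem_cat] /orP[/sA | /tA] //.
Qed.

Lemma sum_of_leW k l z : (k <= l)%N -> sum_of_le A k z -> sum_of_le A l z.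
Proof. by move=> kl [s [sA -> sk]]; exists s; split=> //; apply: leq_trans kl. Qed.

Lemma sum_of_leMn k z m : sum_of_le A k z -> sum_of_le A (k * m)%N (z *+ m).
Proof.
move=> zk; elim: m => [|m IHm]; first by rewrite mulr0n muln0; apply: sum_of_le0.
by rewrite mulrS mulnS; apply: sum_of_leD.
Qed.

Lemma sum_of_leZ k z (c : int) : sum_of_le A k z -> sum_of_le A k (- z) ->
  sum_of_le A (k * `|c|)%N (c *: z).
Proof.
case: c => m zk Nzk /=; rewrite ?NegzE -natz ?scaleNr -?scalerN scaler_nat.
  exact: sum_of_leMn zk.
exact: sum_of_leMn Nzk.
Qed.

Lemma sum_of_le_l1norm k :
  (forall i, sum_of_le A k 'e_i) -> (forall i, sum_of_le A k (- 'e_i)) ->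
  forall z, sum_of_le A (k * l1norm z)%N z.
Proof.
move=> e_k Ne_k z; rewrite [z in sum_of_le _ _ z]row_sum_delta /l1norm big_distrr.
elim/big_ind2: _ => [|k1 x k2 y|i _]; [exact: sum_of_le0 | exact: sum_of_leD |].
exact: sum_of_leZ.
Qed.

Lemma sum_of_le_uniform (I : finType) (t : I -> 'rV[int]_d) :
  (forall i, sum_of A (t i)) -> exists k, forall i, sum_of_le A k (t i).
Proof.
move=> tA; have [f fk] := choice (fun i => iffLR (sum_of_leP (t i)) (tA i)).
by exists (\max_i f i) => i; apply: sum_of_leW (fk i); apply: leq_bigmax.
Qed.

Lemma sum_of_finite_support (I : finType) (t : I -> 'rV[int]_d) :
  (forall i, sum_of A (t i)) ->
  exists Q : seq 'rV[int]_d, (forall q, q \in Q -> A q) /\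
    forall i, sum_of (fun q => q \in Q) (t i).
Proof.
move=> tA; have [s si] := choice tA.
exists (flatten [seq s i | i <- enum I]); split.
  by move=> q /flatten_mapP[i _ /(proj1 (si i))].
move=> i; exists (s i); split; last by case: (si i).
by move=> q qi; apply/flatten_mapP; exists i; rewrite ?mem_enum.
Qed.

Lemma sum_of_basis_l1norm :
  (forall i, sum_of A 'e_i) -> (forall i, sum_of A (- 'e_i)) ->
  exists k, forall z, sum_of_le A (k * l1norm z)%N z.
Proof.
move=> /sum_of_le_uniform[k1 e_k1] /sum_of_le_uniform[k2 Ne_k2].
exists (maxn k1 k2); apply: sum_of_le_l1norm => i.
  by apply: sum_of_leW (e_k1 i); rewrite leq_maxl.
by apply: sum_of_leW (Ne_k2 i); rewrite leq_maxr.
Qed.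

End Sums.

Lemma mulrn_absz_sym (x y : int) : 0 <= x * y -> x *+ `|y| = y *+ `|x|.
Proof. by nia. Qed.

Lemma mulrn_absz_opp (x y : int) : x * y <= 0 -> x *+ `|y| + y *+ `|x| = 0.
Proof. by nia. Qed.

Section Submonoid.
Variables (n : nat) (S : 'rV[int]_n -> Prop).
Hypotheses (S0 : S 0) (SD : forall x y, S x -> S y -> S (x + y)).

Lemma submonoidMn x m : S x -> S (x *+ m).
Proof.
by move=> Sx; elim: m => [|m IHm]; rewrite ?mulr0n // mulrS; apply: SD.
Qed.

Lemma submonoid_sublattice :
  (forall z, exists2 m, (0 < m)%N & S (z *+ m)) -> is_sublattice S.
Proof.
move=> full; split=> // x y Sx Sy; apply: SD => //.
have [[|m] // _ Sm] := full (- y).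
rewrite -[- y](subrK (y *+ m)) -mulNrn -mulrS.
by apply: SD => //; apply: submonoidMn.
Qed.

End Submonoid.

Lemma row_mx0_rsubmx n (y : 'rV[int]_(1 + n)) : y 0 ord0 = 0 -> row_mx 0 (rsubmx y) = y.
Proof.
move=> y0; rewrite -[RHS]hsubmxK; congr row_mx; apply/rowP => i.
by rewrite ord1 !mxE -y0; congr (y 0 _); apply: val_inj.
Qed.

Section Separation.
Variable R : realType.

Lemma dotR_zRD n (v : 'rV[R]_n) x y :
  dotR v (zR R (x + y)) = dotR v (zR R x) + dotR v (zR R y).
Proof. by rewrite /dotR -big_split; apply: eq_bigr => i _; rewrite !mxE intrD mulrDr. Qed.

Lemma dotR_zRMn n (v : 'rV[R]_n) x m : dotR v (zR R (x *+ m)) = dotR v (zR R x) *+ m.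
Proof.
elim: m => [|m IHm]; last by rewrite !mulrS dotR_zRD IHm.
by rewrite /dotR big1 // => i _; rewrite !mxE mulr0.
Qed.

Lemma dotR_delta n (j : 'I_n) (x : 'rV[R]_n) : dotR 'e_j x = x 0 j.
Proof.
rewrite /dotR (bigD1 j) //= mxE !eqxx mul1r big1 ?addr0 // => i /negbTE ij.
by rewrite mxE ij andbF mul0r.
Qed.

Lemma dotRNl n (u x : 'rV[R]_n) : dotR (- u) x = - dotR u x.
Proof. by rewrite /dotR -sumrN; apply: eq_bigr => i _; rewrite mxE mulNr. Qed.

Lemma dotR_row_mx m n (u1 v1 : 'rV[R]_m) (u2 v2 : 'rV[R]_n) :
  dotR (row_mx u1 u2) (row_mx v1 v2) = dotR u1 v1 + dotR u2 v2.
Proof.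
by rewrite /dotR big_split_ord; congr (_ + _); apply: eq_bigr => i _;
  rewrite ?row_mxEl ?row_mxEr.
Qed.

Lemma dotR_row_mx_zR n (t : R) (w : 'rV[R]_n) (s : 'rV[int]_(1 + n)) :
  dotR (row_mx t%:M w) (zR R s) = t * (s 0 ord0)%:~R + dotR w (zR R (rsubmx s)).
Proof.
rewrite -[s in LHS]hsubmxK /zR map_row_mx dotR_row_mx; congr (_ + _).
rewrite /dotR big_ord1 !mxE eqxx mulr1n; congr (_ * (s 0 _)%:~R).
exact: val_inj.
Qed.

Section Slice.
Variables (n : nat) (S : 'rV[int]_(1 + n) -> Prop).
Hypotheses (S0 : S 0) (SD : forall x y, S x -> S y -> S (x + y)).
Variables (a b : 'rV[int]_(1 + n)).
Hypotheses (Sa : S a) (Sb : S b) (a0_gt0 : 0 < a 0 ord0) (b0_lt0 : b 0 ord0 < 0).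

Section SliceSeparated.
Variable w : 'rV[R]_n.
Hypotheses (w_neq0 : w != 0)
  (w_slice : forall y, S (row_mx 0 y) -> 0 <= dotR w (zR R y)).

Let g (s : 'rV[int]_(1 + n)) : R := dotR w (zR R (rsubmx s)).
Let coord0 (s : 'rV[int]_(1 + n)) : R := (s 0 ord0)%:~R.

(* A positive combination of [x] and [y] lies in the slice. *)
Lemma slice_cross x y : S x -> S y -> 0 < x 0 ord0 -> y 0 ord0 < 0 ->
  0 <= g x * - coord0 y + g y * coord0 x.
Proof.
move=> Sx Sy x0 y0; pose c := x *+ `|y 0 ord0| + y *+ `|x 0 ord0|.
have gD u v : g (u + v) = g u + g v by rewrite /g raddfD dotR_zRD.
have gMn u m : g (u *+ m) = g u *+ m by rewrite /g raddfMn dotR_zRMn.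
have c0 : c 0 ord0 = 0.
  by rewrite !mxE !mulmxnE mulrn_absz_opp // mulr_ge0_le0 // ltW.
have Sc : S c by apply: SD; apply: submonoidMn.
have := @w_slice (rsubmx c); rewrite row_mx0_rsubmx // -/(g c) gD !gMn.
rewrite -[g x *+ _]mulr_natr -[g y *+ _]mulr_natr !natr_absz.
by rewrite (gtr0_norm x0) (ltr0_norm y0) intrN; apply.
Qed.

Lemma slice_separation_extends :
  exists v : 'rV[R]_(1 + n), v != 0 /\ forall s, S s -> 0 <= dotR v (zR R s).
Proof.
pose E := [set - g x / coord0 x | x in [set x | S x /\ 0 < x 0 ord0]]%classic.
have E_ub y : S y -> y 0 ord0 < 0 -> ubound E (g y / - coord0 y).
  move=> Sy y0 _ [x [Sx x0] <-]; have := slice_cross Sx Sy x0 y0.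
  have fx : 0 < coord0 x by rewrite ltr0z.
  have fy : 0 < - coord0 y by rewrite oppr_gt0 ltrz0.
  by rewrite ler_pdivrMr // mulrAC ler_pdivlMr //; nra.
have E0 : (E !=set0)%classic by exists (- g a / coord0 a), a.
have E_sup : has_sup E by split=> //; exists (g b / - coord0 b); apply: E_ub.
exists (row_mx (sup E)%:M w); split.
  apply: contra_neq w_neq0 => v0.
  by rewrite -(row_mxKr (sup E)%:M w) v0 raddf0.
move=> s Ss; rewrite dotR_row_mx_zR -/(coord0 s) -/(g s).
case: (ltgtP (s 0 ord0) 0) => s0.
- have := ge_sup E0 (E_ub s Ss s0).
  have fs : 0 < - coord0 s by rewrite oppr_gt0 ltrz0.
  by rewrite ler_pdivlMr //; nra.
- have /(sup_upper_bound E_sup) : E (- g s / coord0 s) by exists s.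
  have fs : 0 < coord0 s by rewrite ltr0z.
  by rewrite ler_pdivrMr //; nra.
- by rewrite /coord0 s0 mulr0 add0r; apply: w_slice; rewrite row_mx0_rsubmx.
Qed.

End SliceSeparated.

Lemma slice_full_extends :
  (forall y, exists2 m, (0 < m)%N & S (row_mx 0 (y *+ m))) ->
  forall z, exists2 m, (0 < m)%N & S (z *+ m).
Proof.
move=> full z.
have [c [Sc c0 zc]] : exists c, [/\ S c, c 0 ord0 != 0 &
    z 0 ord0 *+ `|c 0 ord0| = c 0 ord0 *+ `|z 0 ord0|].
  case: (leP 0 (z 0 ord0)) => z0; [exists a | exists b].
    by rewrite gt_eqF // mulrn_absz_sym // mulr_ge0 // ltW.
  by rewrite lt_eqF // mulrn_absz_sym // mulr_le0 // ltW.
pose k := absz (c 0 ord0); pose l := absz (z 0 ord0).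
pose y := z *+ k - c *+ l.
have [m m0 Sym] := full (rsubmx y).
exists (k * m)%N; first by rewrite muln_gt0 absz_gt0 c0.
have -> : z *+ (k * m) = y *+ m + c *+ (l * m) by rewrite mulrnBl !mulrnA subrK.
apply: SD; last exact: submonoidMn.
rewrite -raddfMn row_mx0_rsubmx // in Sym.
by rewrite mulmxnE !mxE !mulmxnE zc subrr mul0rn.
Qed.

End Slice.

Lemma submonoid_halfspace_or_full n (S : 'rV[int]_n -> Prop) :
  S 0 -> (forall x y, S x -> S y -> S (x + y)) ->
  (exists v : 'rV[R]_n, v != 0 /\ forall s, S s -> 0 <= dotR v (zR R s))
  \/ (forall z, exists2 m, (0 < m)%N & S (z *+ m)).
Proof.
elim: n S => [|n IHn] S S0 SD.
  by right=> z; exists 1%N; rewrite // mulr1n (thinmx0 z).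
have e0_neq0 : 'e_ord0 != 0 :> 'rV[R]_n.+1.
  by apply/eqP => /rowP/(_ ord0); rewrite !mxE !eqxx => /eqP; rewrite oner_eq0.
have [[a Sa a0]|a_npos] := pselect (exists2 a, S a & 0 < a 0 ord0); last first.
  left; exists (- 'e_ord0); rewrite oppr_eq0; split=> // s Ss.
  rewrite dotRNl dotR_delta mxE oppr_ge0 lerz0 leNgt.
  by apply/negP => s0; apply: a_npos; exists s.
have [[b Sb b0]|b_nneg] := pselect (exists2 b, S b & b 0 ord0 < 0); last first.
  left; exists 'e_ord0; split=> // s Ss.
  rewrite dotR_delta mxE ler0z leNgt.
  by apply/negP => s0; apply: b_nneg; exists s.
pose slice (y : 'rV[int]_n) := S (row_mx (0 : 'rV_1) y).
have slice0 : slice 0 by rewrite /slice row_mx0.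
have sliceD x y : slice x -> slice y -> slice (x + y).
  by move=> Sx Sy; rewrite /slice -[0 : 'rV_1]addr0 -add_row_mx; apply: SD.
have [[w [w0 hw]] | full] := IHn slice slice0 sliceD.
  by left; apply: (slice_separation_extends S0 SD Sa Sb a0 b0 w0 hw).
by right; apply: (slice_full_extends S0 SD Sa Sb a0 b0).
Qed.

End Separation.

Lemma lattice_trichotomy (R : realType) d (P : 'rV[int]_d -> Prop) :
  (exists v : 'rV[R]_d, v != 0 /\ forall p, P p -> 0 <= dotR v (zR R p))
  \/ (exists L : 'rV[int]_d -> Prop, strict_sublattice L /\ forall p, P p -> L p)
  \/ (exists Q : seq 'rV[int]_d, (forall q, q \in Q -> P q) /\
        spanning (fun q => q \in Q)).
Proof.
have PS p : P p -> sum_of P p by apply: sum_of1.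
have [[v [v0 hv]] | full] :=
  submonoid_halfspace_or_full R (@sum_of0 _ P) (@sum_ofD _ P).
  by left; exists v; split=> // p /PS /hv.
right; have [[z Nz]|all_sums] := pselect (exists z, ~ sum_of P z).
  left; exists (sum_of P); split=> //; split; last by exists z.
  exact: submonoid_sublattice (@sum_of0 _ P) (@sum_ofD _ P) full.
right; have sums z : sum_of P z by apply: contrapT => Nz; apply: all_sums; exists z.
have [Q1 [Q1P e_Q1]] := sum_of_finite_support (fun i => sums 'e_i).
have [Q2 [Q2P Ne_Q2]] := sum_of_finite_support (fun i => sums (- 'e_i)).
exists (Q1 ++ Q2); split; first by move=> q; rewrite mem_cat => /orP[/Q1P | /Q2P].
have [k k_sum] := @sum_of_basis_l1norm _ (fun q => q \in Q1 ++ Q2)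
  (fun i => sum_of_sub (mem_subseq (prefix_subseq Q1 Q2)) (e_Q1 i))
  (fun i => sum_of_sub (mem_subseq (suffix_subseq Q1 Q2)) (Ne_Q2 i)).
by move=> z; apply/sum_of_leP; exists (k * l1norm z)%N.
Qed.

Lemma mx_norm_ge_coef (R : realType) d (x : 'rV[R]_d) i : `|x 0 i| <= `|x|.
Proof.
by rewrite [`|x|]mx_normrE; apply/bigmax_geP; right; exists (0, i).
Qed.

Section NormOnRows.
Variables (R : realType) (d : nat) (N : 'rV[R]_d -> R).
Hypothesis normN : is_norm N.

Lemma is_norm_eq0 x : N x = 0 -> x = 0.
Proof. by case: normN => + _; apply. Qed.

Lemma is_normZ a x : N (a *: x) = `|a| * N x.
Proof. by case: normN => _ [-> _]. Qed.

Lemma is_norm_triangle x y : N (x + y) <= N x + N y.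
Proof. by case: normN => _ [_ +]; apply. Qed.

Lemma is_norm0 : N 0 = 0.
Proof. by rewrite -(scale0r 0) is_normZ normr0 mul0r. Qed.

Lemma is_normN x : N (- x) = N x.
Proof. by rewrite -scaleN1r is_normZ normrN normr1 mul1r. Qed.

Lemma is_norm_ge0 x : 0 <= N x.
Proof.
have := is_norm_triangle x (- x); rewrite subrr is_norm0 is_normN.
by rewrite -mulr2n pmulrn_lge0.
Qed.

Lemma is_norm_dist x y : `|N x - N y| <= N (x - y).
Proof.
have := is_norm_triangle (x - y) y; have := is_norm_triangle (y - x) x.
rewrite !subrK -opprB is_normN ler_norml; lra.
Qed.

Lemma is_norm_le_mx_norm x : N x <= (\sum_(j < d) N ('e_j)) * `|x|.
Proof.
rewrite {1}[x]row_sum_delta mulr_suml.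
apply: le_trans (_ : \sum_(j < d) N (x 0 j *: 'e_j) <= _).
  elim/big_ind2: _ => [|u a v b|j _]; rewrite ?is_norm0 //.
  by move=> ua vb; apply: le_trans (is_norm_triangle _ _) (lerD ua vb).
apply: ler_sum => j _; rewrite is_normZ mulrC.
by apply: ler_wpM2l; [exact: is_norm_ge0 | exact: mx_norm_ge_coef].
Qed.

Lemma is_norm_continuous : continuous N.
Proof.
pose K := \sum_(j < d) N ('e_j).
have K1 : 0 < K + 1 by rewrite ltr_pwDr // sumr_ge0 // => j _; apply: is_norm_ge0.
move=> x; apply/(@cvgrPdist_lt R R^o _ (nbhs x) (nbhs_filter x)) => e e0.
apply/(@nbhs_normP R ('rV[R]_d : normedModType R)).
exists (e / (K + 1)) => /=; first by rewrite divr_gt0.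
move=> y /=; rewrite ltr_pdivlMr // => xy.
have := le_trans (is_norm_dist x y) (is_norm_le_mx_norm (x - y)); rewrite -/K.
have : K * `|x - y| <= (K + 1) * `|x - y| by rewrite ler_wpM2r // lerDl.
rewrite mulrC in xy; lra.
Qed.

(* [N] attains a positive minimum on the unit sphere of the sup norm, which is compact. *)
Lemma mx_norm_le_is_norm : exists2 c : R, 0 < c & forall x, `|x| <= c * N x.
Proof.
pose S := [set x : 'rV[R]_d | `|x| = 1]%classic.
have [[a Sa]|S0] := pselect (S !=set0)%classic; last first.
  exists 1 => // x; rewrite mul1r; have [->|x0] := eqVneq x 0.
    by rewrite normr0 is_norm0.
  by exfalso; apply: S0; exists (`|x|^-1 *: x); rewrite /S /= normfZV.
have Scompact : compact S.
  apply: bounded_closed_compact.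
    by exists 1; split => // M M1 x Sx; rewrite /= Sx ltW.
  apply: (preimage_closed (f := Num.norm : 'rV[R]_d -> R) (D := [set 1]%classic)).
    by move=> z _; exact: norm_continuous.
  exact: closed_eq.
have [c Sc cmin] := EVT_min_rV (ex_intro _ a Sa) Scompact
  (continuous_subspaceT is_norm_continuous).
have Nc : 0 < N c.
  rewrite lt_def is_norm_ge0 andbT; apply/eqP => /is_norm_eq0 c0.
  by move: Sc; rewrite inE /S /= c0 normr0 => /eqP; rewrite eq_sym oner_eq0.
exists (N c)^-1 => [|x]; first by rewrite invr_gt0.
have [->|x0] := eqVneq x 0; first by rewrite normr0 is_norm0 mulr0.
have nx : 0 < `|x| by rewrite normr_gt0.
have /cmin : `|x|^-1 *: x \in S by rewrite inE /S /= normfZV.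
rewrite is_normZ ger0_norm ?invr_ge0 // => /(ler_wpM2l (ltW nx)).
by rewrite mulrA mulfV ?gt_eqF // mul1r [_^-1 * _]mulrC ler_pdivlMr.
Qed.

End NormOnRows.

Lemma l1norm_le_mx_norm (R : realType) d (z : 'rV[int]_d) :
  (l1norm z)%:R <= d%:R * `|zR R z|.
Proof.
apply: le_trans (_ : \sum_(i < d) `|zR R z| <= _); last first.
  by rewrite sumr_const card_ord mulr_natl.
rewrite /l1norm natr_sum; apply: ler_sum => i _; rewrite natr_absz intr_norm.
by have := mx_norm_ge_coef (zR R z) i; rewrite mxE.
Qed.

Lemma sumr_le_size (R : numDomainType) (T : eqType) (s : seq T) (f : T -> R) B :
  (forall x, x \in s -> f x <= B) -> \sum_(x <- s) f x <= (size s)%:R * B.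
Proof.
move=> fB; rewrite -sum1_size natr_sum mulr_suml big_seq [leRHS]big_seq.
by apply: ler_sum => x xs; rewrite mulr1n mul1r fB.
Qed.

Lemma spanning_sum_bounds (R : realType) d (Q : seq 'rV[int]_d) (N : 'rV[R]_d -> R) :
  spanning (fun q => q \in Q) -> is_norm N ->
  exists mu nu : R, forall z : 'rV[int]_d,
    exists s : seq 'rV[int]_d,
      (forall q, q \in s -> q \in Q) /\ z = \sum_(q <- s) q /\
      (size s)%:R <= mu * N (zR R z) /\
      \sum_(q <- s) N (zR R q) <= nu * N (zR R z).
Proof.
move=> Qspan normN.
have [k k_sum] := sum_of_basis_l1norm (fun i => Qspan 'e_i) (fun i => Qspan (- 'e_i)).
have [c c_gt0 le_c] := mx_norm_le_is_norm normN.
pose B := \sum_(q <- Q) N (zR R q).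
have B_ge0 : 0 <= B by apply: sumr_ge0 => q _; apply: is_norm_ge0.
have le_B q : q \in Q -> N (zR R q) <= B.
  move=> qQ; rewrite /B (big_rem q qQ) /= lerDl.
  by apply: sumr_ge0 => q' _; apply: is_norm_ge0.
exists (k%:R * d%:R * c), (k%:R * d%:R * c * B) => z.
have [s [sQ zs size_s]] := k_sum z.
have size_le : (size s)%:R <= k%:R * d%:R * c * N (zR R z).
  apply: le_trans (_ : (k * l1norm z)%:R <= _); first by rewrite ler_nat.
  rewrite natrM -!mulrA ler_wpM2l // (le_trans (l1norm_le_mx_norm R z)) //.
  by rewrite ler_wpM2l.
exists s; do !split=> //.
apply: le_trans (sumr_le_size (fun q qs => le_B q (sQ q qs))) _.
by rewrite mulrAC ler_wpM2r.
Qed.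

Theorem lemma2p6 (R : realType) (d : nat) (P : 'rV[int]_d -> Prop) :
  ( (exists v : 'rV[R]_d, v != 0 /\ forall p, P p -> 0 <= dotR v (zR R p))
    \/ (exists L : 'rV[int]_d -> Prop, strict_sublattice L /\ forall p, P p -> L p)
    \/ (exists Q : seq 'rV[int]_d, (forall q, q \in Q -> P q) /\
          spanning (fun q => q \in Q)) )
  /\
  (forall Q : seq 'rV[int]_d, (forall q, q \in Q -> P q) ->
     spanning (fun q => q \in Q) ->
     forall N : 'rV[R]_d -> R, is_norm N ->
     exists mu nu : R, forall z : 'rV[int]_d,
       exists s : seq 'rV[int]_d,
         (forall q, q \in s -> q \in Q) /\ z = \sum_(q <- s) q /\
         (size s)%:R <= mu * N (zR R z) /\
         \sum_(q <- s) N (zR R q) <= nu * N (zR R z)).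
Proof.
split; first exact: lattice_trichotomy.
by move=> Q _ Qspan N normN; apply: spanning_sum_bounds.
Qed.
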